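(* Let $L = \{(ay+b,y,\tfrac{1}{2}by+c) : y \in \mathbb{R}\}$ with $a,b,c \in \mathbb{R}$ be a horizontal line. Write $q_{L}(y) := \tfrac{1}{2}ay^{2} + by + c$ and $\mathcal{Q}_{L}(y) := (y,q_{L}(y)) \in \mathbb{W}$. Then there is an absolute constant $C$ such that for every $p = (x,y,t) \in \mathbb{H}$, $$\max\{d_{\mathrm{par}}(\Pi(p),\mathcal{Q}_{L}(y)),\ |x - \dot{q}_{L}(y)|\} \leq C(1+|a|)\operatorname{dist}(p,L).$$
   Context: $\mathbb{H}$ is $\mathbb{R}^{3}$ with group law $(x_{1},y_{1},t_{1}) \cdot (x_{2},y_{2},t_{2}) = (x_{1}+x_{2},y_{1}+y_{2},t_{1}+t_{2}+\tfrac{1}{2}(x_{1}y_{2}-x_{2}y_{1}))$ and metric $d(p,q) = \|q^{-1}\cdot p\|$ with $\|(x,y,t)\| = \max\{\sqrt{x^{2}+y^{2}},\sqrt{|t|}\}$; $\operatorname{dist}$ is w.r.t. $d$. $\mathbb{W}$ is $\mathbb{R}^{2}$ with $d_{\mathrm{par}}((y,t),(\xi,\tau)) = \max\{|y-\xi|,|t-\tau|^{1/2}\}$, and $\Pi(x,y,t) := (y,t+\tfrac{1}{2}xy) \in \mathbb{W}$ is the vertical projection. $\dot{q}_{L}$ denotes the derivative of $q_{L}$. *)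

From Stdlib Require Import Reals.
From Coquelicot Require Import Coquelicot.
Open Scope R_scope.

Definition Hpt : Type := (R * R * R)%type.
Definition Hx (p : Hpt) : R := fst (fst p).
Definition Hy (p : Hpt) : R := snd (fst p).
Definition Ht (p : Hpt) : R := snd p.

Definition Hmul (p q : Hpt) : Hpt :=
  (Hx p + Hx q, Hy p + Hy q,
   Ht p + Ht q + / 2 * (Hx p * Hy q - Hx q * Hy p)).

Definition Hinv (p : Hpt) : Hpt := (- Hx p, - Hy p, - Ht p).

Definition Hnorm (p : Hpt) : R :=
  Rmax (sqrt (Hx p ^ 2 + Hy p ^ 2)) (sqrt (Rabs (Ht p))).

Definition Hdist (p q : Hpt) : R := Hnorm (Hmul (Hinv q) p).

(* dist(p, S) = inf_{q in S} d(p,q)  (S nonempty in our use) *)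
Definition Hdist_set (p : Hpt) (S : Hpt -> Prop) : R :=
  real (Glb_Rbar (fun r => exists q, S q /\ r = Hdist p q)).

Definition dpar (w v : R * R) : R :=
  Rmax (Rabs (fst w - fst v)) (sqrt (Rabs (snd w - snd v))).

Definition Proj (p : Hpt) : R * R := (Hy p, Ht p + / 2 * Hx p * Hy p).

Definition hline (a b c : R) : Hpt -> Prop :=
  fun q => exists y : R, q = (a * y + b, y, / 2 * b * y + c).

Definition qL (a b c : R) (y : R) : R := / 2 * a * y ^ 2 + b * y + c.
Definition QL (a b c : R) (y : R) : R * R := (y, qL a b c y).

(* For a point q = (a s + b, s, b s / 2 + c) of L put (v, u, w) := q^-1 p, so
   that |u|, |v| <= d(p, q) and |w| <= d(p, q)^2.  Both quantities to be
   estimated are polynomials in these coordinates,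
     x - q_L'(y) = v - a u,    t + x y / 2 - q_L(y) = w + u v / 2 - a u^2 / 2,
   hence bounded by 2 (1 + |a|) d(p, q) and 4 (1 + |a|)^2 d(p, q)^2
   respectively; taking the infimum over q gives the claim with C = 2. *)
From Stdlib Require Import Reals Lra Psatz.
From Coquelicot Require Import Coquelicot.
Open Scope R_scope.

Lemma Derive_qL a b c y : Derive (qL a b c) y = a * y + b.
Proof. apply is_derive_unique; unfold qL; auto_derive; [easy | field]. Qed.

Lemma dpar_Proj_QL a b c p :
  dpar (Proj p) (QL a b c (Hy p)) =
  sqrt (Rabs (Ht p + / 2 * Hx p * Hy p - qL a b c (Hy p))).
Proof.
  unfold dpar, Proj, QL; simpl.
  rewrite Rminus_diag, Rabs_R0.
  apply Rmax_right, sqrt_pos.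
Qed.

Lemma Rabs_le_sqrt_sum_sqr u v : Rabs u <= sqrt (u ^ 2 + v ^ 2).
Proof.
  rewrite <- sqrt_Rsqr_abs.
  apply sqrt_le_1_alt; unfold Rsqr; nra.
Qed.

Lemma Rabs_Hx_le_Hnorm r : Rabs (Hx r) <= Hnorm r.
Proof. eapply Rle_trans; [apply Rabs_le_sqrt_sum_sqr | apply Rmax_l]. Qed.

Lemma Rabs_Hy_le_Hnorm r : Rabs (Hy r) <= Hnorm r.
Proof.
  eapply Rle_trans; [|apply Rmax_l].
  rewrite Rplus_comm; apply Rabs_le_sqrt_sum_sqr.
Qed.

Lemma Rabs_Ht_le_Hnorm r : Rabs (Ht r) <= Hnorm r ^ 2.
Proof.
  rewrite <- (sqrt_sqrt (Rabs (Ht r))) by apply Rabs_pos.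
  pose proof (sqrt_pos (Rabs (Ht r))).
  assert (sqrt (Rabs (Ht r)) <= Hnorm r) by apply Rmax_r.
  nra.
Qed.

Section LineOffset.

Variables a b c s : R.

Let q : Hpt := (a * s + b, s, / 2 * b * s + c).

Lemma Derive_qL_line_offset p :
  let r := Hmul (Hinv q) p in
  Hx p - Derive (qL a b c) (Hy p) = Hx r - a * Hy r.
Proof. rewrite Derive_qL; unfold Hmul, Hinv, Hx, Hy, q; simpl; ring. Qed.

Lemma Proj_qL_line_offset p :
  let r := Hmul (Hinv q) p in
  Ht p + / 2 * Hx p * Hy p - qL a b c (Hy p) =
  Ht r + Hx r * Hy r / 2 - a * Hy r ^ 2 / 2.
Proof. unfold Hmul, Hinv, Hx, Hy, Ht, qL, q; simpl; field. Qed.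

End LineOffset.

Lemma horizontal_defect_le a r :
  Rabs (Hx r - a * Hy r) <= 2 * (1 + Rabs a) * Hnorm r.
Proof.
  pose proof (Rabs_Hx_le_Hnorm r); pose proof (Rabs_Hy_le_Hnorm r).
  pose proof (Rabs_pos a); pose proof (Rabs_pos (Hx r)).
  assert (Rabs (a * Hy r) <= Rabs a * Hnorm r).
  { rewrite Rabs_mult; apply Rmult_le_compat_l; lra. }
  pose proof (Rabs_triang (Hx r) (- (a * Hy r))).
  unfold Rminus; rewrite Rabs_Ropp in *; nra.
Qed.

Lemma vertical_defect_le a r :
  sqrt (Rabs (Ht r + Hx r * Hy r / 2 - a * Hy r ^ 2 / 2))
  <= 2 * (1 + Rabs a) * Hnorm r.
Proof.
  pose proof (Rabs_Hx_le_Hnorm r); pose proof (Rabs_Hy_le_Hnorm r).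
  pose proof (Rabs_Ht_le_Hnorm r); pose proof (Rabs_pos a).
  set (d := Hnorm r) in *.
  assert (0 <= d) by (pose proof (Rabs_pos (Hx r)); lra).
  assert (Hxy : Rabs (Hx r * Hy r / 2) <= d ^ 2 / 2).
  { unfold Rdiv; rewrite !Rabs_mult, Rabs_inv, (Rabs_right 2) by lra.
    pose proof (Rabs_pos (Hx r)); pose proof (Rabs_pos (Hy r)); nra. }
  assert (Hyy : Rabs (a * Hy r ^ 2 / 2) <= Rabs a * d ^ 2 / 2).
  { unfold Rdiv; rewrite !Rabs_mult, Rabs_inv, (Rabs_right 2), <- RPow_abs
      by lra.
    assert (Rabs (Hy r) ^ 2 <= d ^ 2)
      by (apply pow_incr; pose proof (Rabs_pos (Hy r)); lra).
    nra. }
  rewrite <- (sqrt_pow2 (2 * (1 + Rabs a) * d)) by nra.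
  apply sqrt_le_1_alt.
  pose proof (Rabs_triang (Ht r) (Hx r * Hy r / 2)).
  pose proof (Rabs_triang (Ht r + Hx r * Hy r / 2) (- (a * Hy r ^ 2 / 2))).
  unfold Rminus; rewrite Rabs_Ropp in *; nra.
Qed.

Lemma defects_le_Hdist_hline a b c p q : hline a b c q ->
  Rmax (dpar (Proj p) (QL a b c (Hy p)))
       (Rabs (Hx p - Derive (qL a b c) (Hy p)))
  <= 2 * (1 + Rabs a) * Hdist p q.
Proof.
  intros [s ->]; unfold Hdist.
  rewrite dpar_Proj_QL, (Proj_qL_line_offset a b c s),
    (Derive_qL_line_offset a b c s).
  apply Rmax_lub; [apply vertical_defect_le | apply horizontal_defect_le].
Qed.

Lemma Hdist_set_glb p (S : Hpt -> Prop) q0 m :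
  S q0 -> (forall q, S q -> m <= Hdist p q) -> m <= Hdist_set p S.
Proof.
  intros Sq0 Hlb; unfold Hdist_set.
  set (D := fun r => exists q, S q /\ r = Hdist p q).
  destruct (Glb_Rbar_correct D) as [Hle Hgreatest].
  assert (Hup : Rbar_le (Glb_Rbar D) (Hdist p q0))
    by (apply Hle; exists q0; eauto).
  assert (Hlow : Rbar_le m (Glb_Rbar D)).
  { apply Hgreatest; intros r [q [Sq ->]]; exact (Hlb q Sq). }
  destruct (Glb_Rbar D); easy.
Qed.

Theorem lemma4p16 :
  exists C : R, forall (a b c : R) (p : Hpt),
    Rmax (dpar (Proj p) (QL a b c (Hy p)))
         (Rabs (Hx p - Derive (qL a b c) (Hy p)))
    <= C * (1 + Rabs a) * Hdist_set p (hline a b c).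
Proof.
  exists 2; intros a b c p.
  set (M := Rmax _ _); set (k := 2 * (1 + Rabs a)).
  assert (Hk : 0 < k) by (pose proof (Rabs_pos a); unfold k; lra).
  replace M with (k * (M / k)) by (field; lra).
  apply Rmult_le_compat_l; [lra|].
  apply Hdist_set_glb with (q0 := (b, 0, c)).
  - exists 0; f_equal; [f_equal|]; ring.
  - intros q Lq; apply Rmult_le_reg_l with k; [exact Hk|].
    replace (k * (M / k)) with M by (field; lra).
    exact (defects_le_Hdist_hline a b c p q Lq).
Qed.
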